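(* For $n,m\in\mathbb{N}_0$, $$\int_0^\pi x^n\sin^{2m}(x)\,dx=\frac{\pi^n}{4^m}\Bigg(\frac{\pi\binom{2m}{m}}{n+1}-n!\sum_{j=1}^{\lfloor n/2\rfloor}\frac{(-1)^j}{(2\pi)^{2j-1}(n+1-2j)!}\sum_{k=1}^{\infty}\frac{(-1)^k}{k^{2j}}\binom{2m}{m+k}\Bigg).$$
   Context: $\binom{2m}{m+k}=0$ for integers $k>m$. An empty sum is $0$. *)

From Stdlib Require Import Reals Arith Factorial Binomial.
From Coquelicot Require Import Coquelicot.
Open Scope R_scope.

(* Real-valued binomial coefficient with the paper's convention
   binom n k = 0 when k > n (Stdlib's [C n k] does not satisfy this). *)
Definition binom (n k : nat) : R := if Nat.leb k n then Binomial.C n k else 0.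

From Stdlib Require Import Reals Arith Factorial Binomial Lia Lra.
From Coquelicot Require Import Coquelicot.
Open Scope R_scope.

(* Expanding (2 sin x)^(2m) = (-1)^m (e^(ix) - e^(-ix))^(2m) gives
   4^m sin^(2m) x = C(2m,m) + 2 sum_(k>=1) (-1)^k C(2m,m+k) cos(2kx); we prove it by induction
   on m, multiplying by 4 sin^2 x = 2 - 2 cos 2x.  For a in 2Z \ {0}, two integrations by parts
   show that I_n = int_0^PI x^n cos(ax) dx satisfies
   I_(n+2) = (n+2) PI^(n+1) / a^2 - (n+2)(n+1) I_n / a^2 with I_0 = I_1 = 0, which solves to
   I_n = -n! sum_(1<=j<=n/2) (-1)^j PI^(n+1-2j) / ((n+1-2j)! a^(2j)).  Integrating the expansion
   termwise and exchanging the sums over k and j gives the formula; the series over k is a finite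
   sum since C(2m, m+k) = 0 for k > m. *)

Lemma sum_n_m_empty_R (a : nat -> R) n m : (m < n)%nat -> sum_n_m a n m = 0.
Proof. apply (sum_n_m_zero (G := R_AbelianMonoid)). Qed.

Lemma sum_n_Sm_R (a : nat -> R) n m :
  (n <= S m)%nat -> sum_n_m a n (S m) = sum_n_m a n m + a (S m).
Proof. intros; now rewrite sum_n_Sm. Qed.

Lemma sum_Sn_m_R (a : nat -> R) n m :
  (n <= m)%nat -> sum_n_m a n m = a n + sum_n_m a (S n) m.
Proof. intros; now rewrite sum_Sn_m. Qed.

Lemma sum_n_m_shift_R (a : nat -> R) N :
  sum_n_m a 0 (S N) = a 0%nat + sum_n_m (fun k => a (S k)) 0 N.
Proof. rewrite sum_Sn_m_R by lia; now rewrite sum_n_m_S. Qed.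

Lemma sum_n_m_ext_R (a b : nat -> R) n m :
  (forall k, (n <= k <= m)%nat -> a k = b k) -> sum_n_m a n m = sum_n_m b n m.
Proof. apply sum_n_m_ext_loc. Qed.

Lemma sum_n_m_Rplus (u v : nat -> R) n m :
  sum_n_m (fun k => u k + v k) n m = sum_n_m u n m + sum_n_m v n m.
Proof. apply (sum_n_m_plus u v). Qed.

Lemma sum_n_m_Rmult_l (c : R) (u : nat -> R) n m :
  sum_n_m (fun k => c * u k) n m = c * sum_n_m u n m.
Proof. apply (sum_n_m_mult_l c u). Qed.

Lemma sum_n_m_swap (f : nat -> nat -> R) a b N :
  sum_n_m (fun k => sum_n_m (fun j => f j k) a b) 0 N =
  sum_n_m (fun j => sum_n_m (fun k => f j k) 0 N) a b.
Proof.
  induction N as [|N IH].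
  - rewrite sum_n_n; apply sum_n_m_ext; intros j; now rewrite sum_n_n.
  - rewrite sum_n_Sm_R, IH, <- sum_n_m_Rplus by lia.
    apply sum_n_m_ext; intros j; now rewrite sum_n_Sm_R by lia.
Qed.

Lemma Series_finite_support (f : nat -> R) M :
  (forall k, (M < k)%nat -> f k = 0) -> Series f = sum_n_m f 0 M.
Proof.
  intros Hf; apply is_series_unique.
  enough (H : is_lim_seq (sum_n f) (sum_n_m f 0 M)) by exact H.
  apply (is_lim_seq_ext_loc (fun _ => sum_n_m f 0 M)); [|apply is_lim_seq_const].
  exists M; intros p Hp; unfold sum_n.
  rewrite (sum_n_m_Chasles f 0 M p), (sum_n_m_ext_loc f (fun _ => zero) (S M) p)
    by (intros; try apply Hf; lia).
  rewrite sum_n_m_const_zero; symmetry; apply plus_zero_r.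
Qed.

Lemma is_RInt_ext_R (f g : R -> R) lo hi v :
  (forall x, f x = g x) -> is_RInt f lo hi v -> is_RInt g lo hi v.
Proof. intros Hfg; apply is_RInt_ext; auto. Qed.

Lemma is_RInt_lin (f g h : R -> R) lo hi u v p q :
  is_RInt f lo hi u -> is_RInt g lo hi v -> (forall x, h x = p * f x + q * g x) ->
  is_RInt h lo hi (p * u + q * v).
Proof.
  intros Hf Hg Hh.
  apply (is_RInt_ext_R (fun x => p * f x + q * g x)); [auto|].
  apply (is_RInt_plus (V := R_NormedModule)); now apply (is_RInt_scal (V := R_NormedModule)).
Qed.

Lemma is_RInt_sum_n_m (g : nat -> R -> R) (v : nat -> R) lo hi N :
  (forall k, is_RInt (g k) lo hi (v k)) ->
  is_RInt (fun x => sum_n_m (fun k => g k x) 0 N) lo hi (sum_n_m v 0 N).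
Proof.
  intros Hg; induction N as [|N IH].
  - rewrite sum_n_n; apply (is_RInt_ext_R (g 0%nat)); auto.
    intros x; now rewrite sum_n_n.
  - rewrite sum_n_Sm_R by lia.
    replace (sum_n_m v 0 N + v (S N)) with (1 * sum_n_m v 0 N + 1 * v (S N)) by ring.
    apply (is_RInt_lin _ _ _ _ _ _ _ _ _ IH (Hg (S N))); intros x.
    rewrite sum_n_Sm_R by lia; ring.
Qed.

Lemma is_RInt_antiderivative (F f : R -> R) lo hi :
  (forall x, is_derive F x (f x)) -> (forall x, ex_derive f x) ->
  is_RInt f lo hi (F hi - F lo).
Proof.
  intros HF Hf; apply (is_RInt_derive (V := R_CompleteNormedModule)); auto.
  intros x _; apply (ex_derive_continuous (K := R_AbsRing) (V := R_NormedModule)); auto.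
Qed.

Lemma binom_gt n k : (n < k)%nat -> binom n k = 0.
Proof. intros; unfold binom; now rewrite (proj2 (Nat.leb_gt k n)). Qed.

Lemma binom_diag n : binom n n = 1.
Proof. unfold binom; rewrite Nat.leb_refl; apply C_n_n. Qed.

Lemma binom_Sn_Sk n k : binom (S n) (S k) = binom n k + binom n (S k).
Proof.
  destruct (lt_eq_lt_dec k n) as [[Hlt|Heq]|Hgt].
  - unfold binom; rewrite !(proj2 (Nat.leb_le _ _)) by lia; symmetry; now apply pascal.
  - subst k; now rewrite !binom_diag, binom_gt, Rplus_0_r by lia.
  - rewrite !binom_gt by lia; ring.
Qed.

Lemma binom_sym n k : (k <= n)%nat -> binom n k = binom n (n - k).
Proof. intros; unfold binom; rewrite !(proj2 (Nat.leb_le _ _)) by lia; now apply pascal_step1. Qed.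

Definition harmonic (k : nat) (x : R) : R := cos (2 * INR k * x).

Lemma harmonic_0 x : harmonic 0 x = 1.
Proof. unfold harmonic; simpl; now rewrite Rmult_0_r, Rmult_0_l, cos_0. Qed.

Lemma harmonic_prod k x :
  2 * harmonic 1 x * harmonic (S k) x = harmonic (S (S k)) x + harmonic k x.
Proof.
  unfold harmonic.
  replace (2 * INR (S (S k)) * x) with (2 * INR (S k) * x + 2 * INR 1 * x)
    by (rewrite !S_INR, INR_0; ring).
  replace (2 * INR k * x) with (2 * INR (S k) * x - 2 * INR 1 * x)
    by (rewrite !S_INR, INR_0; ring).
  rewrite cos_plus, cos_minus; ring.
Qed.

Lemma four_sin_sqr x : 4 * sin x ^ 2 = 2 - 2 * harmonic 1 x.
Proof. unfold harmonic; simpl INR; rewrite Rmult_1_r, cos_2a_sin; ring. Qed.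

(* [cos_poly a N x] is [sum_(|k| <= N) a_|k| e^(2ikx)], the even trigonometric polynomial with
   coefficient sequence [a]. *)
Definition cos_poly (a : nat -> R) (N : nat) (x : R) : R :=
  2 * sum_n_m (fun k => a k * harmonic k x) 0 N - a 0%nat.

(* Multiplication by [2 cos 2x] maps the coefficients [a_k] to [a_(k-1) + a_(k+1)], with
   [a_(-1) = a_1]. *)
Definition neighbour_sum (a : nat -> R) (k : nat) : R :=
  match k with O => 2 * a 1%nat | S j => a j + a (S (S j)) end.

Lemma cos_poly_succ a N x :
  cos_poly a (S N) x = cos_poly a N x + 2 * (a (S N) * harmonic (S N) x).
Proof. unfold cos_poly; rewrite sum_n_Sm_R by lia; ring. Qed.

Lemma cos_poly_ext a b N x : (forall k, a k = b k) -> cos_poly a N x = cos_poly b N x.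
Proof.
  intros Hab; unfold cos_poly.
  now rewrite Hab, (sum_n_m_ext _ (fun k => b k * harmonic k x)) by (intros; now rewrite Hab).
Qed.

Lemma cos_poly_lin a b p q N x :
  cos_poly (fun k => p * a k + q * b k) N x = p * cos_poly a N x + q * cos_poly b N x.
Proof.
  unfold cos_poly.
  rewrite (sum_n_m_ext_R _ (fun k => p * (a k * harmonic k x) + q * (b k * harmonic k x)))
    by (intros; ring).
  rewrite sum_n_m_Rplus, !sum_n_m_Rmult_l; ring.
Qed.

Lemma harmonic_1_mul_cos_poly a N x :
  2 * harmonic 1 x * cos_poly a N x =
  cos_poly (neighbour_sum a) N x + 2 * (a N * harmonic (S N) x - a (S N) * harmonic N x).
Proof.
  induction N as [|N IH].
  - unfold cos_poly; rewrite !sum_n_n, harmonic_0; simpl; ring.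
  - rewrite !cos_poly_succ, Rmult_plus_distr_l, IH; simpl neighbour_sum.
    replace (2 * harmonic 1 x * (2 * (a (S N) * harmonic (S N) x)))
      with (2 * a (S N) * (2 * harmonic 1 x * harmonic (S N) x)) by ring.
    rewrite harmonic_prod; ring.
Qed.

Definition sin_coef (m k : nat) : R := (-1) ^ k * binom (2 * m) (m + k).

Lemma sin_coef_gt m k : (m < k)%nat -> sin_coef m k = 0.
Proof. intros; unfold sin_coef; rewrite binom_gt by lia; ring. Qed.

Lemma sin_coef_diag m : sin_coef m m = (-1) ^ m.
Proof. unfold sin_coef; replace (m + m)%nat with (2 * m)%nat by lia; rewrite binom_diag; ring. Qed.

Lemma sin_coef_succ m k : sin_coef (S m) k = 2 * sin_coef m k - neighbour_sum (sin_coef m) k.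
Proof.
  destruct k as [|k]; simpl neighbour_sum; unfold sin_coef;
    replace (2 * S m)%nat with (S (S (2 * m))) by lia.
  - rewrite !Nat.add_0_r, Nat.add_1_r, binom_Sn_Sk, (binom_sym (S (2 * m)) m) by lia.
    replace (S (2 * m) - m)%nat with (S m) by lia.
    rewrite binom_Sn_Sk; simpl pow; ring.
  - replace (S m + S k)%nat with (S (S (m + k))) by lia.
    replace (m + S k)%nat with (S (m + k)) by lia.
    replace (m + S (S k))%nat with (S (S (m + k))) by lia.
    rewrite !binom_Sn_Sk; simpl pow; ring.
Qed.

Lemma sin_pow_cos_poly m x : 4 ^ m * sin x ^ (2 * m) = cos_poly (sin_coef m) m x.
Proof.
  induction m as [|m IH].
  - unfold cos_poly; rewrite sum_n_n, harmonic_0; unfold sin_coef; simpl; rewrite binom_diag; ring.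
  - replace (4 ^ S m * sin x ^ (2 * S m)) with (4 * sin x ^ 2 * (4 ^ m * sin x ^ (2 * m)))
      by (replace (2 * S m)%nat with (2 + 2 * m)%nat by lia; rewrite pow_add; simpl; ring).
    rewrite four_sin_sqr, IH, cos_poly_succ, sin_coef_diag.
    rewrite (cos_poly_ext (sin_coef (S m))
               (fun k => 2 * sin_coef m k + -1 * neighbour_sum (sin_coef m) k))
      by (intros; rewrite sin_coef_succ; ring).
    rewrite cos_poly_lin, Rmult_minus_distr_r, harmonic_1_mul_cos_poly, sin_coef_diag,
      sin_coef_gt by lia.
    simpl; ring.
Qed.

Definition cos_moment_term (a : R) (n j : nat) : R :=
  (-1) ^ j * PI ^ (n + 1 - 2 * j) / (INR (fact (n + 1 - 2 * j)) * a ^ (2 * j)).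

Definition cos_moment (a : R) (n : nat) : R :=
  - INR (fact n) * sum_n_m (cos_moment_term a n) 1 (Nat.div2 n).

Lemma cos_moment_SS a n : a <> 0 ->
  cos_moment a (S (S n)) =
  INR (S (S n)) * PI ^ S n / a ^ 2 - INR (S (S n)) * INR (S n) / a ^ 2 * cos_moment a n.
Proof.
  intros Ha; unfold cos_moment.
  change (Nat.div2 (S (S n))) with (S (Nat.div2 n)).
  rewrite sum_Sn_m_R, <- sum_n_m_S by apply le_n_S, le_0_n.
  rewrite (sum_n_m_ext_R _ (fun j => - / a ^ 2 * cos_moment_term a n j)), sum_n_m_Rmult_l.
  2:{ intros j _; unfold cos_moment_term.
      replace (S (S n) + 1 - 2 * S j)%nat with (n + 1 - 2 * j)%nat by lia.
      replace (2 * S j)%nat with (2 + 2 * j)%nat by lia.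
      rewrite pow_add; simpl pow at 1; field.
      repeat split; try apply INR_fact_neq_0; try apply pow_nonzero; auto. }
  unfold cos_moment_term at 1.
  replace (S (S n) + 1 - 2 * 1)%nat with (S n) by lia.
  rewrite !fact_simpl, !mult_INR; simpl pow; field.
  repeat split; try apply INR_fact_neq_0; try apply not_0_INR; auto.
Qed.

Section CosineIntegrals.

Variable a : R.
Hypothesis a_neq0 : a <> 0.
Hypothesis sin_aPI : sin (a * PI) = 0.
Hypothesis cos_aPI : cos (a * PI) = 1.

Lemma is_RInt_pow_cos_0 : is_RInt (fun x => x ^ 0 * cos (a * x)) 0 PI (cos_moment a 0).
Proof.
  replace (cos_moment a 0) with (sin (a * PI) / a - sin (a * 0) / a)
    by (unfold cos_moment; simpl Nat.div2;
        rewrite sum_n_m_empty_R, sin_aPI, Rmult_0_r, sin_0 by lia; simpl; field; auto).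
  apply (is_RInt_antiderivative (fun x => sin (a * x) / a)).
  - intros x; auto_derive; auto; field; auto.
  - intros x; auto_derive; auto.
Qed.

Lemma is_RInt_pow_cos_1 : is_RInt (fun x => x ^ 1 * cos (a * x)) 0 PI (cos_moment a 1).
Proof.
  replace (cos_moment a 1) with
    ((PI * sin (a * PI) / a + cos (a * PI) / a ^ 2) - (0 * sin (a * 0) / a + cos (a * 0) / a ^ 2))
    by (unfold cos_moment; simpl Nat.div2;
        rewrite sum_n_m_empty_R, sin_aPI, cos_aPI, !Rmult_0_r, sin_0, cos_0 by lia;
        simpl; field; auto).
  apply (is_RInt_antiderivative (fun x => x * sin (a * x) / a + cos (a * x) / a ^ 2)).
  - intros x; auto_derive; auto; field; auto.
  - intros x; auto_derive; auto.
Qed.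

Lemma is_RInt_pow_cos_SS n I : is_RInt (fun x => x ^ n * cos (a * x)) 0 PI I ->
  is_RInt (fun x => x ^ S (S n) * cos (a * x)) 0 PI
    (INR (S (S n)) * PI ^ S n / a ^ 2 - INR (S (S n)) * INR (S n) / a ^ 2 * I).
Proof.
  intros HI.
  set (F := fun x =>
         x ^ S (S n) * sin (a * x) / a + INR (S (S n)) * x ^ S n * cos (a * x) / a ^ 2).
  assert (HF : is_RInt (fun x => x ^ S (S n) * cos (a * x) +
                                 INR (S (S n)) * INR (S n) / a ^ 2 * (x ^ n * cos (a * x)))
                 0 PI (INR (S (S n)) * PI ^ S n / a ^ 2)).
  { replace (INR (S (S n)) * PI ^ S n / a ^ 2) with (F PI - F 0)
      by (unfold F; rewrite sin_aPI, cos_aPI; simpl; field; auto).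
    apply (is_RInt_antiderivative F).
    - intros x; unfold F; auto_derive; auto.
      change (match n with O => 1 | S _ => INR n + 1 end) with (INR (S n)).
      rewrite !S_INR; cbn [pow]; field; auto.
    - intros x; auto_derive; auto. }
  replace (INR (S (S n)) * PI ^ S n / a ^ 2 - INR (S (S n)) * INR (S n) / a ^ 2 * I)
    with (1 * (INR (S (S n)) * PI ^ S n / a ^ 2) + - (INR (S (S n)) * INR (S n) / a ^ 2) * I)
    by ring.
  apply (is_RInt_lin _ _ _ _ _ _ _ _ _ HF HI); intros x; ring.
Qed.

Lemma is_RInt_pow_cos n : is_RInt (fun x => x ^ n * cos (a * x)) 0 PI (cos_moment a n).
Proof.
  enough (H : forall n, is_RInt (fun x => x ^ n * cos (a * x)) 0 PI (cos_moment a n) /\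
                        is_RInt (fun x => x ^ S n * cos (a * x)) 0 PI (cos_moment a (S n)))
    by exact (proj1 (H n)).
  intros k; induction k as [|k [IH IHS]].
  - split; [apply is_RInt_pow_cos_0 | apply is_RInt_pow_cos_1].
  - split; [exact IHS|]; rewrite cos_moment_SS by auto; now apply is_RInt_pow_cos_SS.
Qed.

End CosineIntegrals.

Lemma is_RInt_pow n : is_RInt (fun x => x ^ n) 0 PI (PI ^ (n + 1) / INR (n + 1)).
Proof.
  assert (Hn : INR (n + 1) <> 0) by (apply not_0_INR; lia).
  replace (PI ^ (n + 1) / INR (n + 1))
    with (PI ^ (n + 1) / INR (n + 1) - 0 ^ (n + 1) / INR (n + 1))
    by (rewrite pow_i by lia; field; auto).
  apply (is_RInt_antiderivative (fun x => x ^ (n + 1) / INR (n + 1))).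
  - intros x; auto_derive; auto; replace (Init.Nat.pred (n + 1)) with n by lia; field; auto.
  - intros x; auto_derive; auto.
Qed.

Definition harmonic_moment (n k : nat) : R :=
  match k with O => PI ^ (n + 1) / INR (n + 1) | S _ => cos_moment (2 * INR k) n end.

Lemma is_RInt_pow_harmonic n k :
  is_RInt (fun x => x ^ n * harmonic k x) 0 PI (harmonic_moment n k).
Proof.
  destruct k as [|k].
  - apply (is_RInt_ext_R (fun x => x ^ n)); [|apply is_RInt_pow].
    intros x; rewrite harmonic_0; ring.
  - apply is_RInt_pow_cos.
    + apply Rmult_integral_contrapositive; split; [lra|apply not_0_INR; lia].
    + rewrite <- (Rplus_0_l (2 * INR (S k) * PI)), sin_period; apply sin_0.
    + rewrite <- (Rplus_0_l (2 * INR (S k) * PI)), cos_period; apply cos_0.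
Qed.

Lemma is_RInt_pow_cos_poly n c N (M : nat -> R) :
  (forall k, is_RInt (fun x => x ^ n * harmonic k x) 0 PI (M k)) ->
  is_RInt (fun x => x ^ n * cos_poly c N x) 0 PI
    (2 * sum_n_m (fun k => c k * M k) 0 N - c 0%nat * M 0%nat).
Proof.
  intros HM.
  assert (Hsum := is_RInt_sum_n_m (fun k x => c k * (x ^ n * harmonic k x)) _ 0 PI N
                    (fun k => is_RInt_scal (V := R_NormedModule) _ _ _ _ _ (HM k))).
  replace (2 * sum_n_m (fun k => c k * M k) 0 N - c 0%nat * M 0%nat)
    with (2 * sum_n_m (fun k => c k * M k) 0 N + - c 0%nat * M 0%nat) by ring.
  apply (is_RInt_lin _ _ _ _ _ _ _ _ _ Hsum (HM 0%nat)).
  intros x; unfold cos_poly; rewrite harmonic_0.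
  rewrite (sum_n_m_ext_R (fun k => c k * (x ^ n * harmonic k x))
             (fun k => x ^ n * (c k * harmonic k x))), sum_n_m_Rmult_l by (intros; ring).
  ring.
Qed.

Definition moment_coef (n j : nat) : R :=
  (-1) ^ j / ((2 * PI) ^ (2 * j - 1) * INR (fact (n + 1 - 2 * j))).

Lemma double_div2_le n : (2 * Nat.div2 n <= n)%nat.
Proof. rewrite (Nat.div2_odd n) at 2; lia. Qed.

Lemma cos_moment_even_freq n k :
  cos_moment (2 * INR (S k)) n =
  - INR (fact n) *
  (PI ^ n / 2 * sum_n_m (fun j => moment_coef n j / INR (S k) ^ (2 * j)) 1 (Nat.div2 n)).
Proof.
  unfold cos_moment; rewrite <- (sum_n_m_Rmult_l (PI ^ n / 2)); f_equal.
  apply sum_n_m_ext_R; intros j Hj.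
  pose proof (double_div2_le n).
  assert (Hk : INR (S k) <> 0) by (apply not_0_INR; lia).
  unfold cos_moment_term, moment_coef.
  set (e := (2 * j - 1)%nat).
  replace (2 * j)%nat with (S e) by (unfold e; lia).
  replace (PI ^ n) with (PI ^ (n + 1 - S e) * PI ^ e)
    by (rewrite <- pow_add; f_equal; unfold e; lia).
  rewrite !Rpow_mult_distr, <- !tech_pow_Rmult.
  field.
  repeat split; try apply INR_fact_neq_0; try apply pow_nonzero; auto; try lra; apply PI_neq0.
Qed.

Lemma sum_cos_moments_even (c : nat -> R) n N :
  sum_n_m (fun k => c k * cos_moment (2 * INR (S k)) n) 0 N =
  - INR (fact n) * (PI ^ n / 2 *
    sum_n_m (fun j => moment_coef n j * sum_n_m (fun k => c k / INR (S k) ^ (2 * j)) 0 N)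
      1 (Nat.div2 n)).
Proof.
  rewrite (sum_n_m_ext_R _ (fun k => - INR (fact n) * (PI ^ n / 2 *
             sum_n_m (fun j => c k * (moment_coef n j / INR (S k) ^ (2 * j))) 1 (Nat.div2 n)))).
  - rewrite !sum_n_m_Rmult_l, sum_n_m_swap; do 2 f_equal.
    apply sum_n_m_ext_R; intros j _; rewrite <- sum_n_m_Rmult_l.
    apply sum_n_m_ext_R; intros k _; unfold Rdiv; ring.
  - intros k _; rewrite cos_moment_even_freq, (sum_n_m_Rmult_l (c k)); ring.
Qed.

Lemma Series_sin_coef m j :
  Series (fun k => (-1) ^ (k + 1) / INR (k + 1) ^ (2 * j) * binom (2 * m) (m + (k + 1))) =
  sum_n_m (fun k => sin_coef m (S k) / INR (S k) ^ (2 * j)) 0 m.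
Proof.
  rewrite (Series_finite_support _ m) by (intros; rewrite binom_gt by lia; ring).
  apply sum_n_m_ext_R; intros k _; rewrite Nat.add_1_r; unfold sin_coef, Rdiv; ring.
Qed.

Lemma is_RInt_pow_sin_pow n m :
  is_RInt (fun x => x ^ n * sin x ^ (2 * m)) 0 PI
    (/ 4 ^ m * (binom (2 * m) m * (PI ^ (n + 1) / INR (n + 1)) +
                2 * sum_n_m (fun k => sin_coef m (S k) * cos_moment (2 * INR (S k)) n) 0 m)).
Proof.
  assert (H4 : 4 ^ m <> 0) by (apply pow_nonzero; lra).
  apply (is_RInt_ext_R (fun x => / 4 ^ m * (x ^ n * cos_poly (sin_coef m) (S m) x))).
  { intros x; rewrite cos_poly_succ, sin_coef_gt, <- sin_pow_cos_poly by lia; field; auto. }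
  replace (binom (2 * m) m) with (sin_coef m 0) by (unfold sin_coef; rewrite Nat.add_0_r; ring).
  replace (sin_coef m 0 * (PI ^ (n + 1) / INR (n + 1)) +
           2 * sum_n_m (fun k => sin_coef m (S k) * cos_moment (2 * INR (S k)) n) 0 m)
    with (2 * sum_n_m (fun k => sin_coef m k * harmonic_moment n k) 0 (S m)
          - sin_coef m 0 * harmonic_moment n 0)
    by (rewrite sum_n_m_shift_R; cbn [harmonic_moment]; ring).
  apply (is_RInt_scal (V := R_NormedModule)), is_RInt_pow_cos_poly, is_RInt_pow_harmonic.
Qed.

Theorem theorem1 (n m : nat) :
  RInt (fun x => x ^ n * (sin x) ^ (2 * m)) 0 PI =
  PI ^ n / 4 ^ m *
  (PI * binom (2 * m) m / INR (n + 1)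
   - INR (fact n) *
     sum_n_m
       (fun j : nat =>
          (-1) ^ j / ((2 * PI) ^ (2 * j - 1) * INR (fact (n + 1 - 2 * j))) *
          Series (fun k : nat =>
                    (-1) ^ (k + 1) / (INR (k + 1)) ^ (2 * j)
                    * binom (2 * m) (m + (k + 1))))
       1 (Nat.div2 n)).
Proof.
  rewrite (sum_n_m_ext_R _ (fun j => moment_coef n j *
             sum_n_m (fun k => sin_coef m (S k) / INR (S k) ^ (2 * j)) 0 m) 1 (Nat.div2 n))
    by (intros; now rewrite Series_sin_coef).
  rewrite (is_RInt_unique _ _ _ _ (is_RInt_pow_sin_pow n m)), sum_cos_moments_even.
  (* [RInt] lands in the carrier of [R_NormedModule]; [field] needs the equation stated in [R]. *)
  match goal with |- ?lhs = ?rhs => change (@eq R lhs rhs) end.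
  rewrite pow_add; field; split; [apply not_0_INR; lia | apply pow_nonzero; lra].
Qed.
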